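(* Let $G,H$ be graphs, let $a,b$ be vertices of $G$, and let $\alpha,\beta,\gamma,\kappa$ be vertices of $H$. There is perfect state transfer between the pair state of $\{(a,\alpha),(a,\beta)\}$ and the pair state of $\{(b,\gamma),(b,\kappa)\}$ in the Cartesian product $G\square H$ at time $t$ if and only if both: (i) there is perfect Laplacian vertex state transfer between $a$ and $b$ in $G$ at time $t$; and (ii) there is perfect pair state transfer between $e_\alpha-e_\beta$ and $e_\gamma-e_\kappa$ in $H$ at time $t$.
   Context: All graphs are finite and simple. The Cartesian product $G\square H$ has vertex set $V(G)\times V(H)$, with $(g_1,h_1)\sim(g_2,h_2)$ iff either $g_1=g_2$ and $h_1\sim h_2$ in $H$, or $g_1\sim g_2$ in $G$ and $h_1=h_2$. For a graph $X$ with Laplacian $L=\Delta-A$, set $U_X(t)=\exp(itL)$. Perfect pair state transfer between $e_x-e_y$ and $e_z-e_w$ at time $t$ means $U_X(t)(e_x-e_y)=\gamma(e_z-e_w)$ for some $\gamma\in\mathbb{C}$, $|\gamma|=1$; the pair state of a pair $\{x,y\}$ is $e_x-e_y$. Perfect Laplacian vertex state transfer between vertices $a,b$ at time $t$ means $U_X(t)e_a=\gamma e_b$ for some $|\gamma|=1$. *)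

From HB Require Import structures.
From mathcomp Require Import all_boot all_order all_algebra.
From mathcomp Require Import all_classical all_reals all_analysis.
From mathcomp Require Import complex.
Set Implicit Arguments. Unset Strict Implicit. Unset Printing Implicit Defensive.
Import Order.TTheory GRing.Theory Num.Theory.
Local Open Scope ring_scope.
Local Open Scope complex_scope.

Definition simple_graph (V : finType) (adj : rel V) : Prop :=
  symmetric adj /\ irreflexive adj.

Definition cart_adj (V W : finType) (adjG : rel V) (adjH : rel W) :
  rel (V * W) :=
  fun p q => ((p.1 == q.1) && adjH p.2 q.2) || (adjG p.1 q.1 && (p.2 == q.2)).

Definition expm (R : realType) (n : nat) (A : 'M[R[i]]_n) : 'M[R[i]]_n :=
  limn (series (fun k : nat => (k`!%:R)^-1 *: A ^+ k)).

(* Vertices x : V are identified with indices enum_rank x : 'I_#|V|. *)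

Definition laplacian (R : realType) (V : finType) (adj : rel V) :
  'M[R[i]]_#|V| :=
  \matrix_(i, j)
    ((if i == j then (#|[set y | adj (enum_val i) y]|)%:R else 0)
     - (if adj (enum_val i) (enum_val j) then 1 else 0)).

Definition U (R : realType) (V : finType) (adj : rel V) (t : R) :
  'M[R[i]]_#|V| :=
  expm (('i * t%:C) *: laplacian R adj).

Definition e_ (R : realType) (V : finType) (x : V) : 'cV[R[i]]_#|V| :=
  \col_i (if i == enum_rank x then 1 else 0).

Definition pair_state (R : realType) (V : finType) (x y : V) :
  'cV[R[i]]_#|V| := e_ R x - e_ R y.

Definition pair_PST (R : realType) (V : finType) (adj : rel V) (t : R)
  (x y z w : V) : Prop :=
  exists g : R[i], `|g| = 1 /\
    U adj t *m pair_state R x y = g *: pair_state R z w.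

Definition vertex_PST (R : realType) (V : finType) (adj : rel V) (t : R)
  (a b : V) : Prop :=
  exists g : R[i], `|g| = 1 /\ U adj t *m e_ R a = g *: e_ R b.

From HB Require Import structures.
From mathcomp Require Import all_boot all_order all_algebra.
From mathcomp Require Import all_classical all_reals all_analysis.
From mathcomp Require Import complex.
From mathcomp Require Import ring.
Import Order.TTheory GRing.Theory Num.Theory.
Import numFieldTopology.Exports numFieldNormedType.Exports.
Set Implicit Arguments. Unset Strict Implicit. Unset Printing Implicit Defensive.
Local Open Scope ring_scope.
Local Open Scope complex_scope.

(** The Laplacian of G □ H is the Kronecker sum L_G ⊗ I + I ⊗ L_H of two
    commuting matrices, so U_{G□H}(t) = U_G(t) ⊗ U_H(t) and the pair state
    e_(a,α) - e_(a,β) = e_a ⊗ (e_α - e_β) evolves to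
    U_G(t) e_a ⊗ U_H(t) (e_α - e_β).  Since L_G has zero column sums, every
    column of U_G(t) sums to 1.  Hence if this tensor equals
    g e_b ⊗ (e_γ - e_κ) with |g| = 1, its first factor is exactly e_b and its
    second is g (e_γ - e_κ); the converse is immediate. *)

Lemma invfact_mulrn_bin (K : numFieldType) k i (x : K) : (i <= k)%N ->
  (k`!%:R)^-1 * (x *+ 'C(k, i)) = ((k - i)`!%:R)^-1 * (i`!%:R)^-1 * x.
Proof.
move=> le_ik; rewrite -(bin_fact le_ik) !natrM -mulr_natr.
have nz_bin : ('C(k, i)%:R : K) != 0 by rewrite pnatr_eq0 -lt0n bin_gt0.
have nz_fact n : (n`!%:R : K) != 0 by rewrite pnatr_eq0 -lt0n fact_gt0.
by field; rewrite nz_bin !nz_fact.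
Qed.

Lemma sum_triangle_exchange (K : zmodType) (f : nat -> nat -> K) N :
  \sum_(0 <= k < N) \sum_(0 <= i < k.+1) f (k - i)%N i =
  \sum_(0 <= j < N) \sum_(0 <= m < N - j) f m j.
Proof.
elim: N => [|N IH]; first by rewrite !big_geq.
rewrite big_nat_recr //= IH [RHS]big_nat_recr //= subSnn big_nat1.
have -> : \sum_(0 <= j < N) \sum_(0 <= m < N.+1 - j) f m j =
          \sum_(0 <= j < N) (\sum_(0 <= m < N - j) f m j + f (N - j)%N j).
  apply: eq_big_nat => j /andP[_ lt_jN].
  by rewrite subSn ?(ltnW lt_jN) // big_nat_recr.
by rewrite big_split /= big_nat_recr //= subnn addrA.
Qed.

Definition cauchy_prod (K : pzSemiRingType) (a b : nat -> K) (k : nat) : K :=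
  \sum_(0 <= i < k.+1) a (k - i)%N * b i.

Lemma sum_mul_sub_cauchy (K : comPzRingType) (a b : nat -> K) N :
  (\sum_(0 <= m < N) a m) * (\sum_(0 <= j < N) b j)
  - \sum_(0 <= k < N) cauchy_prod a b k =
  \sum_(0 <= j < N) \sum_(N - j <= m < N) a m * b j.
Proof.
rewrite /cauchy_prod (sum_triangle_exchange (fun m j => a m * b j)) big_distrr /= -sumrB.
apply: eq_big_nat => j /andP[_ lt_jN].
rewrite big_distrl /= (@big_cat_nat _ _ _ (N - j)) ?leq_subr //=.
by rewrite addrAC subrr add0r.
Qed.

Lemma exp_coeff_cauchy (R : realType) (x y : R) k :
  cauchy_prod (exp_coeff x) (exp_coeff y) k = exp_coeff (x + y) k.
Proof.
rewrite /cauchy_prod /exp_coeff /= exprDn mulrC big_distrr /= big_mkord.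
by apply: eq_bigr => i _; rewrite invfact_mulrn_bin ?leq_ord //; ring.
Qed.

Lemma outer_eq_deltaP (K : idomainType) (I J : finType)
    (p : I -> K) (w d : J -> K) (b : I) (j : J) :
  \sum_x p x = 1 -> d j != 0 ->
  (forall x y, p x * w y = (x == b)%:R * d y) <->
  (forall x, p x = (x == b)%:R) /\ (forall y, w y = d y).
Proof.
move=> sum_p1 nz_dj; split=> [pw | [pE wE] x y]; last by rewrite pE wE.
have nz_wj : w j != 0.
  by apply: contra nz_dj => /eqP wj0; have := pw b j; rewrite wj0 eqxx mulr0 mul1r => <-.
have p_out x : x != b -> p x = 0.
  move=> /negPf xb; apply/eqP; have := pw x j; rewrite xb mul0r => /eqP.
  by rewrite mulf_eq0 (negPf nz_wj) orbF.
have pb1 : p b = 1.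
  by rewrite -sum_p1 (bigD1 b) //= big1 ?addr0 // => x /p_out.
have pE x : p x = (x == b)%:R.
  by have [->|xb] := eqVneq x b; rewrite ?pb1 ?p_out.
by split=> // y; rewrite -[w y]mul1r -pb1 pw eqxx mul1r.
Qed.

Lemma sum_enum_rank (K : nmodType) (V : finType) (F : 'I_#|V| -> K) :
  \sum_i F i = \sum_x F (enum_rank x).
Proof.
rewrite (reindex enum_rank) //.
by exists enum_val => x _; [exact: enum_rankK | exact: enum_valK].
Qed.

Section ComplexSeries.
Variable R : realType.
Local Notation C := (Num.NumField.sort (R[i] : numFieldType)).
Local Open Scope classical_set_scope.

Lemma normc_real (r : R) : `|r%:C| = `|r|%:C :> C.
Proof. by rewrite -complexr0; simpc; rewrite expr0n /= addr0 sqrtr_sqr. Qed.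

Lemma normc_ge_Im (x : C) : `|complex.Im x|%:C <= `|x|.
Proof.
have := normc_ge_Re (x * 'i); rewrite ReiNIm normrN normrM.
suff -> : `|'i : C| = 1 by rewrite mulr1.
by simpc; rewrite expr0n expr1n /= add0r sqrtr1.
Qed.

Lemma gtc0_real (e : C) : 0 < e -> e = (complex.Re e)%:C /\ 0 < complex.Re e.
Proof.
move=> e_gt0; have e_real := RRe_real (gtr0_real e_gt0).
by split; rewrite ?e_real // -ltcR e_real.
Qed.

Lemma cvg_realc (u : nat -> R) (r : R) :
  u @ \oo --> r -> (fun n => (u n)%:C : C) @ \oo --> (r%:C : C).
Proof.
move=> /cvgrPdist_lt u_r; apply/cvgrPdist_lt => e /gtc0_real[-> e_gt0].
by near=> n; rewrite -rmorphB normc_real ltcR; near: n; exact: u_r.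
Unshelve. all: by end_near. Qed.

Lemma dominated_cvg0 (u : nat -> C) (w : nat -> R) :
  w @ \oo --> 0 -> (forall n, `|u n| <= (w n)%:C) -> u @ \oo --> (0 : C).
Proof.
move=> /cvgr0Pnorm_lt w0 uw; apply/cvgr0Pnorm_lt => e /gtc0_real[-> e_gt0].
near=> n; apply: le_lt_trans (uw n) _.
by rewrite ltcR (le_lt_trans (ler_norm _)) //; near: n; exact: w0.
Unshelve. all: by end_near. Qed.

Lemma dominated_series_cvg (u : nat -> C) (v : nat -> R) :
  (forall k, `|u k| <= (v k)%:C) -> cvgn (series v) -> cvgn (series u).
Proof.
move=> uv cvg_v; have v_ge0 k : 0 <= v k by rewrite -ler0c (le_trans _ (uv k)).
set re := fun k => complex.Re (u k); set im := fun k => complex.Im (u k).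
have part_cvg (f : nat -> R) : (forall k, `|f k|%:C <= `|u k|) -> cvgn (series f).
  move=> fu; apply: (@normed_cvg _ R^o); apply: series_le_cvg v_ge0 _ cvg_v => k //=.
  by rewrite -lecR (le_trans (fu k)).
have cvg_re : cvgn (series re) by apply: part_cvg => k; exact: normc_ge_Re.
have cvg_im : cvgn (series im) by apply: part_cvg => k; exact: normc_ge_Im.
have -> : series u = fun n => (series re n)%:C + 'i * (series im n)%:C.
  apply/funext => n; rewrite /series /= !rmorph_sum mulr_sumr -big_split /=.
  by apply: eq_bigr => k _; rewrite [LHS]complexE.
apply/cvg_ex; exists ((limn (series re))%:C + 'i * (limn (series im))%:C).
by apply: cvgD; [|apply: cvgM; [exact: cvg_cst|]]; exact: cvg_realc.
Qed.

(* The defect of the Cauchy product is dominated by that of the real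
   exponential series, which tends to 0 since expR (x + y) = expR x * expR y. *)
Lemma cvg_series_cauchy_exp (a b : nat -> C) (x y : R) (A B : C) :
  (forall m, `|a m| <= (exp_coeff x m)%:C) ->
  (forall m, `|b m| <= (exp_coeff y m)%:C) ->
  series a @ \oo --> A -> series b @ \oo --> B ->
  series (cauchy_prod a b) @ \oo --> A * B.
Proof.
move=> a_dom b_dom a_A b_B.
set d := fun N => series a N * series b N - series (cauchy_prod a b) N.
have d0 : d @ \oo --> (0 : C).
  apply: (@dominated_cvg0 _ (fun N =>
    series (exp_coeff x) N * series (exp_coeff y) N - series (exp_coeff (x + y)) N)).
    rewrite -(subrr (expR (x + y))) [X in X - _]expRD.
    by apply: cvgB; [apply: cvgM|]; exact: is_cvg_series_exp_coeff.
  move=> N; rewrite /d /series /= !sum_mul_sub_cauchy.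
  rewrite (eq_bigr _ (fun k _ => esym (exp_coeff_cauchy x y k))).
  rewrite sum_mul_sub_cauchy rmorph_sum (le_trans (ler_norm_sum _ _ _)) //.
  apply: ler_sum => j _; rewrite rmorph_sum (le_trans (ler_norm_sum _ _ _)) //.
  by apply: ler_sum => m _; rewrite normrM rmorphM; apply: ler_pM.
have -> : series (cauchy_prod a b) = fun N => series a N * series b N - d N.
  by apply/funext => N; rewrite /d opprB addrC subrK.
by rewrite -[A * B]subr0; apply: cvgB d0; apply: cvgM; [exact: a_A | exact: b_B].
Qed.

End ComplexSeries.

Section MatrixExponential.
Variable R : realType.
Local Notation C := (Num.NumField.sort (R[i] : numFieldType)).
Local Open Scope classical_set_scope.

Lemma mx_cvg_entrywise m n (S : nat -> 'M[C]_(m, n)) (L : 'M[C]_(m, n)) :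
  (forall i j, (fun N => S N i j) @ \oo --> L i j) -> S @ \oo --> L.
Proof.
move=> S_L; apply/cvg_ballP => e e_gt0.
have near_row i : \forall N \near \oo, forall j, ball (L i j) e (S N i j).
  by apply: filter_forall => j; exact: (cvg_ball (S_L i j)).
apply: filterS (filter_forall _ near_row) => N near_N.
by split=> // i j; exact: near_N.
Qed.

Lemma mx_entry_bound m n (X : 'M[C]_(m, n)) :
  exists2 B : R, 0 <= B & forall i j, `|X i j| <= B%:C.
Proof.
set s : C := \sum_i \sum_j `|X i j|.
have s_ge0 : 0 <= s by apply: sumr_ge0 => i _; exact: sumr_ge0.
have s_real := RRe_real (ger0_real s_ge0).
exists (complex.Re s); first by rewrite -ler0c s_real.
move=> i j; rewrite s_real /s (bigD1 i) //= (bigD1 j) //= -addrA lerDl.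
by rewrite addr_ge0 ?sumr_ge0 // => i' _; exact: sumr_ge0.
Qed.

Lemma mx_exp_entry_bound n (X : 'M[C]_n) (B : R) : 0 <= B ->
  (forall i j, `|X i j| <= B%:C) ->
  forall k i j, `|(X ^+ k) i j| <= ((n%:R * B) ^+ k)%:C.
Proof.
move=> B_ge0 X_B; elim=> [|k IH] i j.
  by rewrite expr0 expr0 mxE; case: (i == j); rewrite ?normr1 ?normr0 ?ler0c.
rewrite exprSr mxE (le_trans (ler_norm_sum _ _ _)) //.
apply: le_trans (_ : \sum_(l < n) ((n%:R * B) ^+ k)%:C * B%:C <= _).
  by apply: ler_sum => l _; rewrite normrM; apply: ler_pM.
rewrite sumr_const card_ord -rmorphM -rmorphMn lecR.
by rewrite exprSr -mulr_natr [n%:R * B]mulrC mulrA.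
Qed.

Lemma expm_term_dominated n (X : 'M[C]_n) : exists x : R,
  forall k i j, `|(k`!%:R)^-1 * (X ^+ k) i j| <= (exp_coeff x k)%:C.
Proof.
have [B B_ge0 X_B] := mx_entry_bound X.
exists (n%:R * B) => k i j.
have -> : (k`!%:R)^-1 = ((k`!%:R : R)^-1)%:C :> C by rewrite fmorphV rmorph_nat.
rewrite /exp_coeff /= normrM normc_real [`|_^-1|]ger0_norm ?invr_ge0 ?ler0n //.
rewrite mulrC rmorphM; apply: ler_pM => //; first by rewrite ler0c invr_ge0 ler0n.
exact: mx_exp_entry_bound.
Qed.

Lemma series_expm_entry n (X : 'M[C]_n) i j :
  series (fun k => (k`!%:R)^-1 * (X ^+ k) i j) @ \oo --> (expm X : 'M[C]_n) i j.
Proof.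
have [x X_dom] := expm_term_dominated X.
have entry_cvg i' j' : cvgn (series (fun k => (k`!%:R)^-1 * (X ^+ k) i' j')).
  exact: dominated_series_cvg (fun k => X_dom k i' j') (is_cvg_series_exp_coeff x).
have series_entry N i' j' : series (fun k => (k`!%:R)^-1 *: X ^+ k) N i' j' =
    series (fun k => (k`!%:R)^-1 * (X ^+ k) i' j') N.
  by rewrite /series /= summxE; apply: eq_bigr => k _; rewrite mxE.
have expm_cvg : series (fun k => (k`!%:R)^-1 *: X ^+ k) @ \oo -->
    (\matrix_(i', j') limn (series (fun k => (k`!%:R)^-1 * (X ^+ k) i' j')) : 'M[C]_n).
  apply: mx_cvg_entrywise => i' j'; rewrite mxE.
  by under eq_fun do rewrite series_entry; exact: entry_cvg.
by rewrite /expm (cvg_lim _ expm_cvg) // mxE; exact: entry_cvg.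
Qed.

Lemma sum_col_exprX n (X : 'M[C]_n) : (forall j, \sum_i X i j = 0) ->
  forall k j, \sum_i (X ^+ k) i j = (k == 0)%:R.
Proof.
move=> X0 [|k] j.
  rewrite expr0 (bigD1 j) //= mxE eqxx big1 ?addr0 // => i /negPf.
  by rewrite mxE => ->.
rewrite exprS; under eq_bigr do rewrite mxE.
by rewrite exchange_big big1 // => l _; rewrite -mulr_suml X0 mul0r.
Qed.

Lemma sum_col_expm n (X : 'M[C]_n) : (forall j, \sum_i X i j = 0) ->
  forall j, \sum_i (expm X : 'M[C]_n) i j = 1.
Proof.
move=> X0 j.
have sum_cvg : (fun N => \sum_i series (fun k => (k`!%:R)^-1 * (X ^+ k) i j) N)
    @ \oo --> \sum_i (expm X : 'M[C]_n) i j.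
  by apply: (cvg_big add_continuous) => // i _; exact: series_expm_entry.
rewrite -(cvg_lim _ sum_cvg) //; apply: lim_near_cst => //; near=> N.
have N_gt0 : (0 < N)%N by near: N; exists 1%N.
rewrite /series /= exchange_big /=.
under eq_bigr do rewrite -mulr_sumr sum_col_exprX //.
rewrite big_ltn // invr1 mul1r big_nat_cond big1 ?addr0 // => k /andP[/andP[k_gt0 _] _].
by rewrite gtn_eqF // mulr0.
Unshelve. all: by end_near. Qed.

End MatrixExponential.

Section KroneckerSum.
Variable R : realType.
Local Notation C := (Num.NumField.sort (R[i] : numFieldType)).
Variables VG VH : finType.
Local Notation nG := #|VG|.
Local Notation nH := #|VH|.
Local Notation nGH := #|{: VG * VH}|.

Definition kron (P : 'M[C]_nG) (Q : 'M[C]_nH) : 'M[C]_nGH :=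
  \matrix_(p, q) (P (enum_rank (enum_val p).1) (enum_rank (enum_val q).1) *
                  Q (enum_rank (enum_val p).2) (enum_rank (enum_val q).2)).

Lemma kronE P Q x y x' y' :
  kron P Q (enum_rank (x, y)) (enum_rank (x', y')) =
  P (enum_rank x) (enum_rank x') * Q (enum_rank y) (enum_rank y').
Proof. by rewrite mxE !enum_rankK. Qed.

Lemma matrix_pair_rankP (M N : 'M[C]_nGH) :
  (forall x y x' y', M (enum_rank (x, y)) (enum_rank (x', y')) =
                     N (enum_rank (x, y)) (enum_rank (x', y'))) -> M = N.
Proof.
move=> MN; apply/matrixP => p q; rewrite -(enum_valK p) -(enum_valK q).
by case: (enum_val p) (enum_val q) => [x y] [x' y']; exact: MN.
Qed.

Lemma sum_pair_rank (F : 'I_nGH -> C) :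
  \sum_r F r = \sum_x \sum_y F (enum_rank (x, y)).
Proof. by rewrite sum_enum_rank pair_bigA; apply: eq_bigr => -[]. Qed.

Lemma kronM P Q P' Q' : kron P Q *m kron P' Q' = kron (P *m P') (Q *m Q').
Proof.
apply: matrix_pair_rankP => x y x' y'; rewrite kronE !mxE sum_pair_rank !sum_enum_rank.
rewrite big_distrl; apply: eq_bigr => u _; rewrite big_distrr; apply: eq_bigr => v _.
by rewrite !kronE mulrACA.
Qed.

Lemma kron1 : kron 1%:M 1%:M = 1%:M.
Proof.
apply: matrix_pair_rankP => x y x' y'; rewrite kronE !mxE.
by rewrite !(inj_eq enum_rank_inj) xpair_eqE -mulnb natrM.
Qed.

Lemma kron_exprX1 P k : kron P 1%:M ^+ k = kron (P ^+ k) 1%:M.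
Proof.
elim: k => [|k IH]; first by rewrite !expr0 kron1.
by rewrite !exprS IH -!mulmxE kronM mulmx1.
Qed.

Lemma kron_expr1X Q k : kron 1%:M Q ^+ k = kron 1%:M (Q ^+ k).
Proof.
elim: k => [|k IH]; first by rewrite !expr0 kron1.
by rewrite !exprS IH -!mulmxE kronM mulmx1.
Qed.

Lemma kron_sum_exprE X Y k x y x' y' :
  ((kron X 1%:M + kron 1%:M Y) ^+ k) (enum_rank (x, y)) (enum_rank (x', y')) =
  \sum_(i < k.+1) ((X ^+ (k - i)) (enum_rank x) (enum_rank x') *
                   (Y ^+ i) (enum_rank y) (enum_rank y')) *+ 'C(k, i).
Proof.
have comm_XY : GRing.comm (kron X 1%:M) (kron 1%:M Y).
  by rewrite /GRing.comm -!mulmxE !kronM !mulmx1 !mul1mx.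
rewrite exprDn_comm // summxE; apply: eq_bigr => i _.
by rewrite mulmxnE kron_exprX1 kron_expr1X -mulmxE kronM mulmx1 mul1mx kronE.
Qed.

Lemma expm_kron_sum X Y :
  expm (kron X 1%:M + kron 1%:M Y) = kron (expm X) (expm Y).
Proof.
apply: matrix_pair_rankP => x y x' y'; rewrite kronE.
set a := fun m => (m`!%:R)^-1 * (X ^+ m) (enum_rank x) (enum_rank x').
set b := fun m => (m`!%:R)^-1 * (Y ^+ m) (enum_rank y) (enum_rank y').
have [[u a_dom] [v b_dom]] := (expm_term_dominated X, expm_term_dominated Y).
rewrite -(cvg_lim _
  (@series_expm_entry _ _ _ (enum_rank (x, y)) (enum_rank (x', y')))) //.
have -> : (fun k => (k`!%:R)^-1 *
    ((kron X 1%:M + kron 1%:M Y) ^+ k) (enum_rank (x, y)) (enum_rank (x', y'))) =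
    cauchy_prod a b.
  apply/funext => k; rewrite /cauchy_prod kron_sum_exprE mulr_sumr big_mkord.
  by apply: eq_bigr => i _; rewrite invfact_mulrn_bin ?leq_ord // /a /b; ring.
apply: cvg_lim => //.
apply: (cvg_series_cauchy_exp (fun m => a_dom m _ _) (fun m => b_dom m _ _));
  exact: series_expm_entry.
Qed.

End KroneckerSum.

Section QuantumWalk.
Variable R : realType.
Local Notation C := (Num.NumField.sort (R[i] : numFieldType)).

Lemma natr_card_set (V : finType) (P : pred V) :
  (#|[set y | P y]|%:R : C) = \sum_y (if P y then 1 else 0).
Proof. by rewrite -sum1_card natr_sum big_mkcond; apply: eq_bigr => y _; rewrite inE. Qed.

Lemma sum_col_laplacian (V : finType) (adj : rel V) : symmetric adj ->
  forall j, \sum_i (laplacian R adj : 'M[C]_#|V|) i j = 0.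
Proof.
move=> adj_sym j; under eq_bigr do rewrite mxE.
rewrite sumrB (bigD1 j) //= eqxx big1 ?addr0 => [|i /negPf -> //].
rewrite sum_enum_rank natr_card_set; apply/eqP; rewrite subr_eq0; apply/eqP.
by apply: eq_bigr => x _; rewrite enum_rankK adj_sym.
Qed.

Lemma sum_col_U (V : finType) (adj : rel V) (t : R) : symmetric adj ->
  forall j, \sum_i (U adj t : 'M[C]_#|V|) i j = 1.
Proof.
move=> adj_sym; apply: sum_col_expm => j; under eq_bigr do rewrite mxE.
by rewrite -mulr_sumr sum_col_laplacian // mulr0.
Qed.

Section CartesianProduct.
Variables (VG VH : finType) (adjG : rel VG) (adjH : rel VH).
Hypotheses (adjG_irr : irreflexive adjG) (adjH_irr : irreflexive adjH).

Lemma card_cart_adj x y :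
  #|[set z | cart_adj adjG adjH (x, y) z]| =
  (#|[set x' | adjG x x']| + #|[set y' | adjH y y']|)%N.
Proof.
have -> : [set z | cart_adj adjG adjH (x, y) z] =
    finset.setX [set x] [set y' | adjH y y'] :|:
    finset.setX [set x' | adjG x x'] [set y].
  by apply/setP => -[x' y']; rewrite !inE /cart_adj /= (eq_sym x') (eq_sym y').
rewrite cardsU !cardsX !cards1 mul1n muln1 (_ : #|_ :&: _| = 0)%N.
  by rewrite subn0 addnC.
apply/eqP; rewrite cards_eq0; apply/eqP/setP => -[x' y']; rewrite !inE /=.
by case: eqP => [->|]; rewrite ?adjG_irr ?andbF.
Qed.

Lemma laplacian_cart :
  laplacian R (cart_adj adjG adjH) =
  kron (laplacian R adjG) 1%:M + kron 1%:M (laplacian R adjH).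
Proof.
apply: matrix_pair_rankP => x y x' y'; rewrite [RHS]mxE !kronE !mxE !enum_rankK.
rewrite !(inj_eq enum_rank_inj) xpair_eqE card_cart_adj natrD /cart_adj /=.
have [<-|ne_x] := eqVneq x x'; have [<-|ne_y] := eqVneq y y';
  rewrite /= ?adjG_irr ?adjH_irr ?andbF ?andbT /=.
- by ring.
- by case: (adjH y y'); ring.
- by case: (adjG x x'); ring.
- by ring.
Qed.

Lemma U_cart (t : R) : U (cart_adj adjG adjH) t = kron (U adjG t) (U adjH t).
Proof.
rewrite /U laplacian_cart -expm_kron_sum; congr expm.
by apply/matrixP => p q; rewrite !mxE; ring.
Qed.

End CartesianProduct.

Section States.
Variable V : finType.

Lemma col_rankP (u v : 'cV[C]_#|V|) :
  u = v <-> forall y, u (enum_rank y) 0 = v (enum_rank y) 0.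
Proof.
split=> [-> // | uv]; apply/colP => i.
by rewrite -(enum_valK i); exact: uv.
Qed.

Lemma mulmx_e (M : 'M[C]_#|V|) (x : V) : M *m e_ R x = col (enum_rank x) M.
Proof.
apply/colP => i; rewrite !mxE (bigD1 (enum_rank x)) //= mxE eqxx mulr1.
by rewrite big1 ?addr0 // => j /negPf; rewrite mxE => ->; rewrite mulr0.
Qed.

Lemma vertex_PSTE (adj : rel V) (t : R) (a b : V) : symmetric adj ->
  vertex_PST adj t a b <->
  forall y, U adj t (enum_rank y) (enum_rank a) = (y == b)%:R.
Proof.
move=> adj_sym.
have colE (g : C) : U adj t *m e_ R a = g *: e_ R b <->
    forall y, U adj t (enum_rank y) (enum_rank a) = g * (y == b)%:R.
  rewrite mulmx_e col_rankP.
  by split=> Ua y; have := Ua y; rewrite !mxE (inj_eq enum_rank_inj) mulrb.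
split=> [[g [_ /colE Ua]] | Ua]; last first.
  by exists 1; rewrite normr1 colE; split=> // y; rewrite mul1r.
suff g1 : g = 1 by move=> y; rewrite Ua g1 mul1r.
rewrite -(sum_col_U t adj_sym (enum_rank a)) sum_enum_rank.
rewrite (bigD1 b) //= big1 => [|y /negPf yb]; last by rewrite Ua yb mulr0.
by rewrite Ua eqxx mulr1 addr0.
Qed.

Lemma pair_PSTE (adj : rel V) (t : R) (x y z w : V) :
  pair_PST adj t x y z w <->
  exists g : C, `|g| = 1 /\ forall v,
    U adj t (enum_rank v) (enum_rank x) - U adj t (enum_rank v) (enum_rank y) =
    g * ((v == z)%:R - (v == w)%:R).
Proof.
rewrite /pair_PST /pair_state mulmxBr !mulmx_e.
split=> -[g [g1 Ug]]; exists g; split=> //; first move=> v.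
  by have := (col_rankP _ _).1 Ug v; rewrite !mxE !(inj_eq enum_rank_inj) -!mulrb.
by apply/col_rankP => v; rewrite !mxE !(inj_eq enum_rank_inj) -!mulrb.
Qed.

End States.

Lemma pair_PST_cartE (VG VH : finType) (adjG : rel VG) (adjH : rel VH)
    (t : R) (a b : VG) (alpha beta gamma kappa : VH) :
  irreflexive adjG -> irreflexive adjH ->
  pair_PST (cart_adj adjG adjH) t (a, alpha) (a, beta) (b, gamma) (b, kappa) <->
  exists g : C, `|g| = 1 /\ forall x y,
    U adjG t (enum_rank x) (enum_rank a) *
      (U adjH t (enum_rank y) (enum_rank alpha) -
       U adjH t (enum_rank y) (enum_rank beta)) =
    (x == b)%:R * (g * ((y == gamma)%:R - (y == kappa)%:R)).
Proof.
move=> adjG_irr adjH_irr; rewrite pair_PSTE U_cart //.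
split=> -[g [g1 Ug]]; exists g; split=> //.
  move=> x y; have := Ug (x, y); rewrite !kronE -mulrBr !xpair_eqE => ->.
  by case: (x == b); rewrite /= ?mul0r ?mul1r ?subrr ?mulr0.
move=> [x y]; rewrite !kronE -mulrBr !xpair_eqE Ug.
by case: (x == b); rewrite /= ?mul0r ?mul1r ?subrr ?mulr0.
Qed.

End QuantumWalk.

Theorem mainTheorem3 (R : realType)
  (VG VH : finType) (adjG : rel VG) (adjH : rel VH)
  (HG : simple_graph adjG) (HH : simple_graph adjH)
  (a b : VG) (alpha beta gamma kappa : VH)
  (Hab : alpha != beta) (Hgk : gamma != kappa) (t : R) :
  pair_PST (cart_adj adjG adjH) t (a, alpha) (a, beta) (b, gamma) (b, kappa)
  <-> vertex_PST adjG t a b /\ pair_PST adjH t alpha beta gamma kappa.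
Proof.
have [[adjG_sym adjG_irr] [_ adjH_irr]] := (HG, HH).
rewrite pair_PST_cartE // vertex_PSTE // pair_PSTE.
have colG : \sum_x U adjG t (enum_rank x) (enum_rank a) = 1.
  by rewrite -(sum_col_U t adjG_sym (enum_rank a)) sum_enum_rank.
have nz_target (g : R[i]) : `|g| = 1 ->
    g * ((gamma == gamma)%:R - (gamma == kappa)%:R) != 0.
  by move=> g1; rewrite eqxx (negPf Hgk) subr0 mulr1 -normr_eq0 g1 oner_eq0.
split=> [[g [g1 /(outer_eq_deltaP _ _ colG (nz_target g g1))[UG UH]]] | ].
  by split=> //; exists g.
move=> [UG [g [g1 UH]]]; exists g; split=> //.
by apply/(outer_eq_deltaP _ _ colG (nz_target g g1)).
Qed.
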